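(* Let $\mathbf{M}$ be a right proper model category in which the terminal object $\ast$ is cofibrant, and let $Y$ be an object of $\mathbf{M}$. Then the function $\psi_Y:\pi_0(\mathbf{Triv}/Y)\to[\ast,Y]$, sending an object $W\to Y$ to the composite $\ast\xleftarrow{\simeq}W\to Y$ in the homotopy category $\mathrm{Ho}(\mathbf{M})$, is a bijection.
   Context: $\mathbf{Triv}/Y$ is the category whose objects are morphisms $W\to Y$ of $\mathbf{M}$ such that $W\to\ast$ is a weak equivalence, and whose morphisms are commutative triangles over $Y$; $\pi_0$ denotes the set of path components; $[\ast,Y]$ is the set of morphisms in $\mathrm{Ho}(\mathbf{M})$. Right proper means weak equivalences are stable under pullback along fibrations. *)

From Stdlib Require Import Relations.
Set Implicit Arguments.
Unset Strict Implicit.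

Record Category := {
  Ob :> Type;
  Hom : Ob -> Ob -> Type;
  idm : forall a, Hom a a;
  comp : forall a b c, Hom b c -> Hom a b -> Hom a c;
  comp_id_l : forall a b (f : Hom a b), comp (idm b) f = f;
  comp_id_r : forall a b (f : Hom a b), comp f (idm a) = f;
  comp_assoc : forall a b c d (f : Hom a b) (g : Hom b c) (h : Hom c d),
      comp h (comp g f) = comp (comp h g) f
}.
Arguments Hom {C} a b : rename.
Arguments idm {C} a : rename.
Arguments comp {C a b c} g f : rename.

Section Limits.
Variable C : Category.

Definition is_terminal (t : C) : Prop :=
  forall a : C, exists f : Hom a t, forall g : Hom a t, g = f.
Definition is_initial (i : C) : Prop :=
  forall a : C, exists f : Hom i a, forall g : Hom i a, g = f.

Definition is_pullback (a b c P : C) (f : Hom a c) (g : Hom b c)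
  (p1 : Hom P a) (p2 : Hom P b) : Prop :=
  comp f p1 = comp g p2 /\
  forall (Q : C) (q1 : Hom Q a) (q2 : Hom Q b), comp f q1 = comp g q2 ->
    exists u : Hom Q P, comp p1 u = q1 /\ comp p2 u = q2 /\
      forall v : Hom Q P, comp p1 v = q1 -> comp p2 v = q2 -> v = u.

Definition is_pushout (a b c P : C) (f : Hom c a) (g : Hom c b)
  (i1 : Hom a P) (i2 : Hom b P) : Prop :=
  comp i1 f = comp i2 g /\
  forall (Q : C) (q1 : Hom a Q) (q2 : Hom b Q), comp q1 f = comp q2 g ->
    exists u : Hom P Q, comp u i1 = q1 /\ comp u i2 = q2 /\
      forall v : Hom P Q, comp v i1 = q1 -> comp v i2 = q2 -> v = u.

Definition is_retract (a b c d : C) (f : Hom a b) (g : Hom c d) : Prop :=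
  exists (i : Hom a c) (r : Hom c a) (j : Hom b d) (s : Hom d b),
    comp r i = idm a /\ comp s j = idm b /\
    comp g i = comp j f /\ comp f r = comp s g.

Definition llp (a b x y : C) (i : Hom a b) (p : Hom x y) : Prop :=
  forall (u : Hom a x) (v : Hom b y), comp p u = comp v i ->
    exists h : Hom b x, comp h i = u /\ comp p h = v.
End Limits.

Definition MorClass (C : Category) := forall a b : C, Hom a b -> Prop.

Record ModelCategory (C : Category) := {
  weq : MorClass C;
  fib : MorClass C;
  cof : MorClass C;
  has_terminal : exists t : C, is_terminal t;
  has_initial : exists i : C, is_initial i;
  has_pullbacks : forall (a b c : C) (f : Hom a c) (g : Hom b c),
      exists (P : C) (p1 : Hom P a) (p2 : Hom P b), is_pullback f g p1 p2;
  has_pushouts : forall (a b c : C) (f : Hom c a) (g : Hom c b),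
      exists (P : C) (i1 : Hom a P) (i2 : Hom b P), is_pushout f g i1 i2;
  weq_id : forall a, weq (idm a);
  fib_id : forall a, fib (idm a);
  cof_id : forall a, cof (idm a);
  weq_comp : forall a b c (f : Hom a b) (g : Hom b c),
      weq f -> weq g -> weq (comp g f);
  fib_comp : forall a b c (f : Hom a b) (g : Hom b c),
      fib f -> fib g -> fib (comp g f);
  cof_comp : forall a b c (f : Hom a b) (g : Hom b c),
      cof f -> cof g -> cof (comp g f);
  weq_2of3_l : forall a b c (f : Hom a b) (g : Hom b c),
      weq g -> weq (comp g f) -> weq f;
  weq_2of3_r : forall a b c (f : Hom a b) (g : Hom b c),
      weq f -> weq (comp g f) -> weq g;
  weq_retract : forall a b c d (f : Hom a b) (g : Hom c d),
      is_retract f g -> weq g -> weq f;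
  fib_retract : forall a b c d (f : Hom a b) (g : Hom c d),
      is_retract f g -> fib g -> fib f;
  cof_retract : forall a b c d (f : Hom a b) (g : Hom c d),
      is_retract f g -> cof g -> cof f;
  lift_cof_trivfib : forall a b x y (i : Hom a b) (p : Hom x y),
      cof i -> fib p -> weq p -> llp i p;
  lift_trivcof_fib : forall a b x y (i : Hom a b) (p : Hom x y),
      cof i -> weq i -> fib p -> llp i p;
  fact_trivcof_fib : forall a b (f : Hom a b),
      exists (z : C) (i : Hom a z) (p : Hom z b),
        cof i /\ weq i /\ fib p /\ comp p i = f;
  fact_cof_trivfib : forall a b (f : Hom a b),
      exists (z : C) (i : Hom a z) (p : Hom z b),
        cof i /\ fib p /\ weq p /\ comp p i = f
}.
Arguments weq {C} M {a b} f : rename.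
Arguments fib {C} M {a b} f : rename.
Arguments cof {C} M {a b} f : rename.

Definition right_proper (C : Category) (M : ModelCategory C) : Prop :=
  forall (a b c P : C) (f : Hom a c) (g : Hom b c) (p1 : Hom P a) (p2 : Hom P b),
    is_pullback f g p1 p2 -> weq M f -> fib M g -> weq M p2.

Definition cofibrant (C : Category) (M : ModelCategory C) (X : C) : Prop :=
  forall (i : C) (f : Hom i X), is_initial i -> cof M f.

(* Morphisms of the localization: zigzags of morphisms of C and formal
   inverses of weak equivalences (read left to right), modulo the
   congruence generated by the composition law of C, identities, and
   w^-1 w = id, w w^-1 = id (Gabriel--Zisman). *)
Section Localization.
Variables (C : Category) (M : ModelCategory C).

Inductive Zig : C -> C -> Type :=
| znil : forall a, Zig a a
| zfwd : forall a b c, Hom a b -> Zig b c -> Zig a c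
| zbwd : forall a b c (w : Hom b a), weq M w -> Zig b c -> Zig a c.

Inductive zstep : forall a c, Zig a c -> Zig a c -> Prop :=
| zs_id : forall a c (r : Zig a c), zstep (zfwd (idm a) r) r
| zs_comp : forall a b c d (f : Hom a b) (g : Hom b c) (r : Zig c d),
    zstep (zfwd f (zfwd g r)) (zfwd (comp g f) r)
| zs_inv_l : forall a b c (w : Hom b a) (H : weq M w) (r : Zig a c),
    zstep (zbwd H (zfwd w r)) r
| zs_inv_r : forall a b c (w : Hom b a) (H : weq M w) (r : Zig b c),
    zstep (zfwd w (zbwd H r)) r
| zs_prf : forall a b c (w : Hom b a) (H H' : weq M w) (r : Zig b c),
    zstep (zbwd H r) (zbwd H' r)
| zs_cong_fwd : forall a b c (f : Hom a b) (r r' : Zig b c),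
    zstep r r' -> zstep (zfwd f r) (zfwd f r')
| zs_cong_bwd : forall a b c (w : Hom b a) (H : weq M w) (r r' : Zig b c),
    zstep r r' -> zstep (zbwd H r) (zbwd H r').

Definition ho_eq (a c : C) : relation (Zig a c) :=
  clos_refl_sym_trans _ (@zstep a c).
End Localization.

Section Triv.
Variables (C : Category) (M : ModelCategory C) (t : C) (Y : C).

(* an object of Triv/Y : W -> Y with W -> * (t terminal) a weak equivalence *)
Record TrivObj := {
  tw_ob : C;
  tw_to_pt : Hom tw_ob t;
  tw_weq : weq M tw_to_pt;
  tw_map : Hom tw_ob Y
}.

Definition triv_hom (o1 o2 : TrivObj) : Prop :=
  exists h : Hom (tw_ob o1) (tw_ob o2), comp (tw_map o2) h = tw_map o1.

(* same path component: equivalence relation generated by morphisms *)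
Definition triv_connected : relation TrivObj :=
  clos_refl_sym_trans _ triv_hom.

Definition psi (o : TrivObj) : Zig M t Y :=
  zbwd (tw_weq o) (zfwd (tw_map o) (znil M Y)).
End Triv.

(* Factor a map W -> a out of a weakly contractible W as a trivial cofibration
   W -> E followed by a fibration E -> a, and pull it back along a weak
   equivalence v : b -> a; by right properness the pullback is again weakly
   contractible.  This base change straightens every zigzag * -> Y in Ho(M)
   into one of the form * <~ W -> Y, which gives surjectivity.  The same
   construction transports objects of Triv/a along zigzags a ~> c; by the
   lifting axiom the transport is well defined on path components, and it is
   invariant under the relations presenting Ho(M).  Transporting the point
   along psi(o) lands in the component of o, so psi(o) determines that
   component. *)

From Stdlib Require Import Relations Setoid Morphisms.
Set Implicit Arguments.
Unset Strict Implicit.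

Lemma terminal_hom_eq (C : Category) (t : C) (Ht : is_terminal t) (a : C)
  (f g : Hom a t) : f = g.
Proof. destruct (Ht a) as [h Hh]. rewrite (Hh f), (Hh g). reflexivity. Qed.

#[export] Instance ho_eq_Equivalence (C : Category) (M : ModelCategory C) (a c : C) :
  Equivalence (@ho_eq C M a c).
Proof.
  split; [intros ?; apply rst_refl | intros ? ?; apply rst_sym | intros ? ? ?; apply rst_trans].
Qed.

#[export] Instance zfwd_Proper (C : Category) (M : ModelCategory C) (a b c : C)
  (f : Hom a b) : Proper (@ho_eq C M b c ==> @ho_eq C M a c) (@zfwd C M a b c f).
Proof.
  intros r r' H; induction H; [apply rst_step, zs_cong_fwd | reflexivity | symmetry
  | etransitivity]; eassumption.
Qed.

#[export] Instance zbwd_Proper (C : Category) (M : ModelCategory C) (a b c : C)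
  (w : Hom b a) (Hw : weq M w) :
  Proper (@ho_eq C M b c ==> @ho_eq C M a c) (@zbwd C M a b c w Hw).
Proof.
  intros r r' H; induction H; [apply rst_step, zs_cong_bwd | reflexivity | symmetry
  | etransitivity]; eassumption.
Qed.

#[export] Instance triv_connected_Equivalence (C : Category) (M : ModelCategory C)
  (t Y : C) : Equivalence (@triv_connected C M t Y).
Proof.
  split; [intros ?; apply rst_refl | intros ? ?; apply rst_sym | intros ? ? ?; apply rst_trans].
Qed.

Section HomotopyCategory.
Variables (C : Category) (M : ModelCategory C).

Lemma ho_eq_fwd_comp (a b c d : C) (f : Hom a b) (g : Hom b c) (X : Zig M c d) :
  ho_eq (zfwd (comp g f) X) (zfwd f (zfwd g X)).
Proof. symmetry; apply rst_step, zs_comp. Qed.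

Lemma ho_eq_bwd_comp_fwd (a b c d : C) (k : Hom a b) (e : Hom b c)
  (Hek : weq M (comp e k)) (He : weq M e) (X : Zig M b d) :
  ho_eq (zbwd Hek (zfwd k X)) (zbwd He X).
Proof.
  transitivity (zbwd Hek (zfwd k (zfwd e (zbwd He X)))).
  { apply zbwd_Proper, zfwd_Proper; symmetry; apply rst_step, zs_inv_r. }
  rewrite <- ho_eq_fwd_comp. apply rst_step, zs_inv_l.
Qed.

Lemma ho_eq_bwd_comp (a b c d : C) (f : Hom a b) (g : Hom b c) (Hf : weq M f)
  (Hg : weq M g) (Hgf : weq M (comp g f)) (X : Zig M a d) :
  ho_eq (zbwd Hgf X) (zbwd Hg (zbwd Hf X)).
Proof.
  rewrite <- (ho_eq_bwd_comp_fwd Hgf Hg).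
  apply zbwd_Proper; symmetry; apply rst_step, zs_inv_r.
Qed.

Lemma ho_eq_fwd_bwd_square (a b c d e : C) (pi : Hom c a) (v : Hom b a)
  (p1 : Hom d b) (p2 : Hom d c) (Hv : weq M v) (Hp2 : weq M p2) (X : Zig M b e) :
  comp v p1 = comp pi p2 -> ho_eq (zfwd pi (zbwd Hv X)) (zbwd Hp2 (zfwd p1 X)).
Proof.
  intros Hsq. symmetry.
  transitivity (zbwd Hp2 (zfwd p1 (zfwd v (zbwd Hv X)))).
  { apply zbwd_Proper, zfwd_Proper; symmetry; apply rst_step, zs_inv_r. }
  rewrite <- ho_eq_fwd_comp, Hsq, ho_eq_fwd_comp. apply rst_step, zs_inv_l.
Qed.

End HomotopyCategory.

Section TrivialObjects.
Variables (C : Category) (M : ModelCategory C) (t : C).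
Hypothesis Ht : is_terminal t.

Lemma weq_to_terminal_2of3_r (a b : C) (k : Hom a b) (w : Hom a t) (e : Hom b t) :
  weq M k -> weq M w -> weq M e.
Proof.
  intros Hk Hw. apply (weq_2of3_r Hk). rewrite (terminal_hom_eq Ht _ w). exact Hw.
Qed.

Lemma weq_to_terminal_2of3_l (a b : C) (p : Hom a b) (e : Hom b t) (u : Hom a t) :
  weq M e -> weq M u -> weq M p.
Proof.
  intros He Hu. apply (weq_2of3_l (g := e)); [exact He|].
  rewrite (terminal_hom_eq Ht _ u). exact Hu.
Qed.

Lemma triv_hom_refl (a : C) (o : TrivObj M t a) : triv_hom o o.
Proof. exists (idm _). apply comp_id_r. Qed.

Definition triv_post (a b : C) (f : Hom a b) (o : TrivObj M t a) : TrivObj M t b :=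
  Build_TrivObj (tw_weq o) (comp f (tw_map o)).

Lemma triv_hom_post (a b : C) (f : Hom a b) (o1 o2 : TrivObj M t a) :
  triv_hom o1 o2 -> triv_hom (triv_post f o1) (triv_post f o2).
Proof. intros [h Hh]. exists h. simpl. rewrite <- comp_assoc, Hh. reflexivity. Qed.

Lemma triv_hom_post_id (a : C) (o : TrivObj M t a) : triv_hom o (triv_post (idm a) o).
Proof. exists (idm _). simpl. rewrite comp_id_r, comp_id_l. reflexivity. Qed.

Lemma triv_hom_post_comp (a b c : C) (f : Hom a b) (g : Hom b c) (o : TrivObj M t a) :
  triv_hom (triv_post (comp g f) o) (triv_post g (triv_post f o)).
Proof. exists (idm _). simpl. rewrite comp_id_r, comp_assoc. reflexivity. Qed.

Definition is_base_change (a b : C) (v : Hom b a) (o : TrivObj M t a)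
  (o' : TrivObj M t b) : Prop :=
  exists (E : C) (k : Hom (tw_ob o) E) (pi : Hom E a) (p2 : Hom (tw_ob o') E),
    cof M k /\ weq M k /\ fib M pi /\ comp pi k = tw_map o /\
    is_pullback v pi (tw_map o') p2.

Lemma base_change_hom (a b : C) (v : Hom b a) (o1 o2 : TrivObj M t a)
  (o1' o2' : TrivObj M t b) :
  triv_hom o1 o2 -> is_base_change v o1 o1' -> is_base_change v o2 o2' ->
  triv_hom o1' o2'.
Proof.
  intros [h Hh] (E1 & k1 & pi1 & q1 & Hc1 & Hw1 & _ & Hk1 & [Hsq1 _])
    (E2 & k2 & pi2 & q2 & _ & _ & Hf2 & Hk2 & [_ Hpb2]).
  assert (Hsq : comp pi2 (comp k2 h) = comp pi1 k1)
    by (rewrite comp_assoc, Hk2, Hh, Hk1; reflexivity).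
  destruct (lift_trivcof_fib Hc1 Hw1 Hf2 Hsq) as [l [_ Hl]].
  destruct (Hpb2 _ (tw_map o1') (comp l q1)) as [u [Hu _]].
  - rewrite Hsq1, comp_assoc, Hl. reflexivity.
  - exists u. exact Hu.
Qed.

Lemma base_change_post_connected (a b : C) (v : Hom b a) (o : TrivObj M t a)
  (o' : TrivObj M t b) :
  is_base_change v o o' -> triv_connected (triv_post v o') o.
Proof.
  intros (E & k & pi & p2 & _ & Hk & _ & Hpi & [Hsq _]).
  destruct (Ht E) as [e _].
  pose (oE := Build_TrivObj (weq_to_terminal_2of3_r e Hk (tw_weq o)) pi).
  transitivity oE; [|symmetry]; apply rst_step.
  - exists p2. symmetry. exact Hsq.
  - exists k. exact Hpi.
Qed.

Lemma base_change_post_hom (a b : C) (v : Hom b a) (o o' : TrivObj M t b) :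
  is_base_change v (triv_post v o) o' -> triv_hom o o'.
Proof.
  intros (E & k & pi & p2 & _ & _ & _ & Hpi & [_ Hpb]).
  destruct (Hpb _ (tw_map o) k (eq_sym Hpi)) as [u [Hu _]].
  exists u. exact Hu.
Qed.

Hypothesis Hrp : right_proper M.

Lemma base_change_exists (a b : C) (v : Hom b a) (Hv : weq M v) (o : TrivObj M t a) :
  exists o', is_base_change v o o'.
Proof.
  destruct (fact_trivcof_fib M (tw_map o)) as (E & k & pi & Hc & Hk & Hpi & Hfac).
  destruct (has_pullbacks M v pi) as (P & p1 & p2 & Hpb).
  destruct (Ht E) as [e _].
  pose proof (weq_to_terminal_2of3_r e Hk (tw_weq o)) as He.
  pose proof (Hrp Hpb Hv Hpi) as Hp2.
  exists (Build_TrivObj (weq_comp Hp2 He) p1), E, k, pi, p2.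
  tauto.
Qed.

(* A relation rather than a function: each base change depends on a chosen
   factorization and pullback. *)
Fixpoint transport (a c : C) (z : Zig M a c) : TrivObj M t a -> TrivObj M t c -> Prop :=
  match z in Zig _ a c return TrivObj M t a -> TrivObj M t c -> Prop with
  | znil _ _ => fun o x => x = o
  | zfwd f r => fun o x => transport r (triv_post f o) x
  | @zbwd _ _ _ _ _ v _ r => fun o x =>
      exists o', is_base_change v o o' /\ transport r o' x
  end.

Lemma transport_total (a c : C) (z : Zig M a c) (o : TrivObj M t a) :
  exists x, transport z o x.
Proof.
  revert o; induction z as [a|a b c f r IH|a b c v Hv r IH]; intros o; simpl.
  - exists o. reflexivity.
  - apply IH.
  - destruct (base_change_exists Hv o) as [o' Ho'].
    destruct (IH o') as [x Hx].
    exists x, o'. split; assumption.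
Qed.

Lemma transport_hom (a c : C) (z : Zig M a c) (o1 o2 : TrivObj M t a)
  (x1 x2 : TrivObj M t c) :
  triv_hom o1 o2 -> transport z o1 x1 -> transport z o2 x2 -> triv_connected x1 x2.
Proof.
  revert o1 o2; induction z as [a|a b c f r IH|a b c v Hv r IH];
    simpl; intros o1 o2 Hh T1 T2.
  - subst. apply rst_step, Hh.
  - exact (IH _ _ _ _ (triv_hom_post f Hh) T1 T2).
  - destruct T1 as [o1' [B1 T1]], T2 as [o2' [B2 T2]].
    exact (IH _ _ _ _ (base_change_hom Hh B1 B2) T1 T2).
Qed.

Lemma transport_connected (a c : C) (z : Zig M a c) (o1 o2 : TrivObj M t a)
  (x1 x2 : TrivObj M t c) :
  triv_connected o1 o2 -> transport z o1 x1 -> transport z o2 x2 -> triv_connected x1 x2.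
Proof.
  intros Hc; revert x1 x2.
  induction Hc as [o1 o2 Hh|o|o1 o2 _ IH|o1 o2 o3 _ IH12 _ IH23]; intros x1 x2 T1 T2.
  - exact (transport_hom Hh T1 T2).
  - exact (transport_hom (triv_hom_refl o) T1 T2).
  - symmetry. exact (IH _ _ T2 T1).
  - destruct (transport_total z o2) as [x T].
    transitivity x; [exact (IH12 _ _ T1 T) | exact (IH23 _ _ T T2)].
Qed.

Lemma transport_zstep (a c : C) (z z' : Zig M a c) (o : TrivObj M t a)
  (x x' : TrivObj M t c) :
  zstep z z' -> transport z o x -> transport z' o x' -> triv_connected x x'.
Proof.
  intros Hz; revert o x x'.
  induction Hz; simpl; intros o x x' T T'.
  - refine (transport_connected _ T T').
    symmetry. apply rst_step, triv_hom_post_id.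
  - refine (transport_connected _ T T').
    symmetry. apply rst_step, triv_hom_post_comp.
  - destruct T as [o' [B T]].
    exact (transport_connected (base_change_post_connected B) T T').
  - destruct T as [o' [B T]].
    refine (transport_connected _ T T').
    symmetry. apply rst_step, (base_change_post_hom B).
  - exact (transport_connected (z := zbwd H r) (reflexivity o) T T').
  - exact (IHHz _ _ _ T T').
  - destruct T as [o1 [B1 T]], T' as [o2 [B2 T']].
    destruct (transport_total r' o1) as [y Ty].
    transitivity y; [exact (IHHz _ _ _ T Ty)|].
    refine (transport_connected _ Ty T').
    apply rst_step, (base_change_hom (triv_hom_refl o) B1 B2).
Qed.

Lemma transport_ho_eq (a c : C) (z z' : Zig M a c) (o : TrivObj M t a)
  (x x' : TrivObj M t c) :
  ho_eq z z' -> transport z o x -> transport z' o x' -> triv_connected x x'.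
Proof.
  intros Hz; revert x x'.
  induction Hz as [z z' Hz|z|z z' _ IH|z1 z2 z3 _ IH12 _ IH23]; intros x x' T T'.
  - exact (transport_zstep Hz T T').
  - exact (transport_connected (reflexivity o) T T').
  - symmetry. exact (IH _ _ T' T).
  - destruct (transport_total z2 o) as [y Ty].
    transitivity y; [exact (IH12 _ _ T Ty) | exact (IH23 _ _ Ty T')].
Qed.

Definition psi_then (a c : C) (o : TrivObj M t a) (z : Zig M a c) : Zig M t c :=
  zbwd (tw_weq o) (zfwd (tw_map o) z).

Lemma psi_then_hom (a c : C) (z : Zig M a c) (o1 o2 : TrivObj M t a) :
  triv_hom o1 o2 -> ho_eq (psi_then o1 z) (psi_then o2 z).
Proof.
  intros [h Hh]. destruct o1 as [W1 w1 Hw1 m1]; simpl in *; subst m1.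
  assert (w1 = comp (tw_to_pt o2) h) by apply (terminal_hom_eq Ht).
  subst w1. unfold psi_then; simpl.
  rewrite ho_eq_fwd_comp. apply ho_eq_bwd_comp_fwd.
Qed.

Lemma psi_then_post (a b c : C) (f : Hom a b) (z : Zig M b c) (o : TrivObj M t a) :
  ho_eq (psi_then o (zfwd f z)) (psi_then (triv_post f o) z).
Proof. unfold psi_then; simpl. rewrite <- ho_eq_fwd_comp. reflexivity. Qed.

Lemma psi_then_base_change (a b c : C) (v : Hom b a) (Hv : weq M v) (z : Zig M b c)
  (o : TrivObj M t a) (o' : TrivObj M t b) :
  is_base_change v o o' -> ho_eq (psi_then o (zbwd Hv z)) (psi_then o' z).
Proof.
  intros (E & k & pi & p2 & _ & Hk & _ & Hpi & [Hsq _]).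
  destruct (Ht E) as [e _].
  pose proof (weq_to_terminal_2of3_r e Hk (tw_weq o)) as He.
  pose proof (weq_to_terminal_2of3_l p2 He (tw_weq o')) as Hp2.
  destruct o as [W w Hw m], o' as [P u Hu p1]; simpl in *.
  assert (w = comp e k) by apply (terminal_hom_eq Ht).
  assert (u = comp e p2) by apply (terminal_hom_eq Ht).
  subst w u m. unfold psi_then; simpl.
  rewrite ho_eq_fwd_comp, (ho_eq_bwd_comp_fwd _ He), (ho_eq_fwd_bwd_square Hv Hp2 _ Hsq).
  symmetry. apply ho_eq_bwd_comp.
Qed.

Lemma psi_then_image (a c : C) (z : Zig M a c) (o : TrivObj M t a) :
  exists x, ho_eq (psi_then o z) (psi x).
Proof.
  revert o; induction z as [a|a b c f r IH|a b c v Hv r IH]; intros o.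
  - exists o. reflexivity.
  - destruct (IH (triv_post f o)) as [x Hx].
    exists x. rewrite psi_then_post. exact Hx.
  - destruct (base_change_exists Hv o) as [o' B].
    destruct (IH o') as [x Hx].
    exists x. rewrite (psi_then_base_change Hv r B). exact Hx.
Qed.

Definition triv_point : TrivObj M t t := Build_TrivObj (weq_id M t) (idm t).

Lemma transport_psi_point (Y : C) (o x : TrivObj M t Y) :
  transport (psi o) triv_point x -> triv_hom x o.
Proof. simpl. intros [o' [_ ->]]. exists (tw_map o'). reflexivity. Qed.

Lemma psi_connected (Y : C) (o1 o2 : TrivObj M t Y) :
  triv_connected o1 o2 -> ho_eq (psi o1) (psi o2).
Proof.
  induction 1 as [o1 o2 Hh| |o1 o2 _ IH|o1 o2 o3 _ IH12 _ IH23].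
  - exact (psi_then_hom (znil M Y) Hh).
  - reflexivity.
  - symmetry. exact IH.
  - transitivity (psi o2); assumption.
Qed.

Lemma psi_injective (Y : C) (o1 o2 : TrivObj M t Y) :
  ho_eq (psi o1) (psi o2) -> triv_connected o1 o2.
Proof.
  intros H.
  destruct (transport_total (psi o1) triv_point) as [x1 T1].
  destruct (transport_total (psi o2) triv_point) as [x2 T2].
  transitivity x1; [symmetry; apply rst_step, (transport_psi_point T1)|].
  transitivity x2; [exact (transport_ho_eq H T1 T2)|].
  apply rst_step, (transport_psi_point T2).
Qed.

Lemma psi_surjective (Y : C) (z : Zig M t Y) : exists o, ho_eq (psi o) z.
Proof.
  destruct (psi_then_image z triv_point) as [o Ho].
  exists o. rewrite <- Ho. apply rst_step, zs_inv_l.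
Qed.

End TrivialObjects.

Theorem mainTheorem14 (C : Category) (M : ModelCategory C) (t : C)
  (Ht : is_terminal t) (Hrp : right_proper M) (Hcof : cofibrant M t) (Y : C) :
  (forall o1 o2 : TrivObj M t Y,
      triv_connected o1 o2 -> ho_eq (psi o1) (psi o2)) /\
  (forall o1 o2 : TrivObj M t Y,
      ho_eq (psi o1) (psi o2) -> triv_connected o1 o2) /\
  (forall z : Zig M t Y, exists o : TrivObj M t Y, ho_eq (psi o) z).
Proof.
  split; [|split].
  - exact (psi_connected Ht (Y := Y)).
  - exact (psi_injective Ht Hrp (Y := Y)).
  - exact (psi_surjective Ht Hrp (Y := Y)).
Qed.
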